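(* Let $n$ be an odd positive integer and let $h\ge 2$ be an integer. Then there exists a $(2n+1)\times(2n+1)$ matrix $B$, all of whose entries lie in $\{0,1,\ldots,h\}$, which has two distinct real eigenvalues $\lambda\neq\mu$ with $|\lambda-\mu|\le h^{-\frac{(n+3)(n-3)}{4}}$. Moreover, $\lambda$ and $\mu$ are both roots of a single factor of the characteristic polynomial $\chi(B)$ which is irreducible over $\mathbb{Z}$ and has degree $n+1$.
   Context: $\chi(B)=\det(tI-B)$ denotes the characteristic polynomial of $B$, a monic polynomial with integer coefficients. *)

From HB Require Import structures.
From mathcomp Require Import all_boot all_order all_algebra.
From mathcomp Require Import Rstruct.

Set Implicit Arguments. Unset Strict Implicit. Unset Printing Implicit Defensive.
Import Order.TTheory GRing.Theory Num.Theory.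
Local Open Scope ring_scope.

(* The exponent (n+3)(n-3)/4 as an integer; for odd n it is an exact quotient. *)
Definition sep_exp (n : nat) : int := divz ((n%:Z + 3) * (n%:Z - 3)) 4.

(* For odd n = 2m + 3 let a = h^m and p = X^(n+1) - 2(2aX + 1)^2, a Mignotte
   polynomial.  It is Eisenstein at 2, positive at -1/(2a), where the square
   vanishes, and negative at -(1 +- a^-(m+2))/(2a), so two of its real roots are
   within a^-(m+3) = h^-((n+3)(n-3)/4) of each other.  A root lam of p is an
   eigenvalue of a nonnegative integer matrix B of size 2n + 1: the row
   eigenvector consists of the powers lam^i, i <= n, and of two chains of terms
   h^j lam^k in which each step trades one factor h for one factor lam, so that
   every entry of B is 0, 1, 2 or h.  Being irreducible and sharing the root lam
   with chi(B), p divides chi(B).  For n = 1, p = X^2 - 2 serves. *)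

From HB Require Import structures.
From mathcomp Require Import all_boot all_order all_algebra.
From mathcomp Require Import Rstruct polyrcf.
From mathcomp Require Import ring lra zify.

Set Implicit Arguments. Unset Strict Implicit. Unset Printing Implicit Defensive.
Import Order.TTheory GRing.Theory Num.Theory.
Local Open Scope ring_scope.

Lemma size_Xn_sub (R : nzRingType) d (q : {poly R}) :
  (size q <= d)%N -> size ('X^d - q) = d.+1.
Proof. by move=> size_q; rewrite size_polyDl size_polyXn // size_polyN ltnS. Qed.

Lemma monic_Xn_sub (R : nzRingType) d (q : {poly R}) :
  (size q <= d)%N -> 'X^d - q \is monic.
Proof.
by move=> size_q; rewrite monicE lead_coefDl ?lead_coefXn // size_polyXn size_polyN ltnS.
Qed.

Lemma irreducible_Xn_sub2 (d : nat) (r : {poly int}) :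
  (0 < d)%N -> (size r <= d)%N -> ~~ (2 %| r`_0)%Z ->
  irreducible_poly ('X^d - 2 *: r).
Proof.
move=> d_gt0 size_r r0_odd.
have size_2r : (size (2 *: r) <= d)%N by rewrite (leq_trans (size_scale_leq _ _)).
have coef_p i : ('X^d - 2 *: r)`_i = (i == d)%:R - 2 * r`_i by rewrite coefB coefXn coefZ.
apply: (@eisenstein_crit 2) => //.
- by rewrite size_Xn_sub // -(ltn_predK d_gt0).
- by rewrite (monicP (monic_Xn_sub size_2r)).
- rewrite coef_p eq_sym (gtn_eqF d_gt0) sub0r rpredN -[2 ^+ 2]/(2 * 2) dvdzE abszM /=.
  by rewrite dvdn_pmul2l // -dvdzE.
- by move=> i; rewrite size_Xn_sub //= coef_p => /ltn_eqF ->; rewrite sub0r rpredN dvdz_mulr.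
Qed.

(* For even d, Mignotte's polynomial X^d - 2(bX - 1)^2 composed with -X. *)
Definition mignotte_poly (d : nat) (b : int) : {poly int} := 'X^d - 2 *: (b *: 'X + 1) ^+ 2.

Section MignottePoly.
Variables (d : nat) (b : int).
Hypothesis size_sq : (size ((b *: 'X + 1) ^+ 2) <= d)%N.

Let size_2sq : (size (2 *: (b *: 'X + 1) ^+ 2) <= d)%N.
Proof. exact: leq_trans (size_scale_leq _ _) size_sq. Qed.

Lemma size_mignotte_poly : size (mignotte_poly d b) = d.+1.
Proof. exact: size_Xn_sub size_2sq. Qed.

Lemma monic_mignotte_poly : mignotte_poly d b \is monic.
Proof. exact: monic_Xn_sub size_2sq. Qed.

Lemma irreducible_mignotte_poly : irreducible_poly (mignotte_poly d b).
Proof.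
have sq0 : ((b *: 'X + 1) ^+ 2)`_0 = 1 by rewrite -horner_coef0 !hornerE expr1n.
apply: irreducible_Xn_sub2; rewrite ?sq0 //.
apply: leq_trans size_sq; rewrite size_poly_gt0.
by apply: contra_eq_neq sq0 => ->; rewrite coef0.
Qed.

End MignottePoly.

Lemma size_mignotte_square (b : int) : (size ((b *: 'X + 1) ^+ 2) <= 3)%N.
Proof.
apply: leq_trans (size_exp_leq _ 2) _; rewrite -mul_polyC -[1]/(1%:P) size_MXaddC.
by case: ifP => //; rewrite size_polyC; case: (b != 0).
Qed.

Lemma horner_mignotte (R : comNzRingType) d b (x : R) :
  (map_poly intr (mignotte_poly d b)).[x] = x ^+ d - 2 * (b%:~R * x + 1) ^+ 2.
Proof.
rewrite /mignotte_poly rmorphB /= (map_polyZ (intr : {rmorphism int -> R})) map_polyXn.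
have -> : map_poly intr ((b *: 'X + 1) ^+ 2) = (b%:~R *: 'X + 1) ^+ 2 :> {poly R}.
  by rewrite rmorphXn rmorphD /= (map_polyZ (intr : {rmorphism int -> R})) map_polyX rmorph1.
by rewrite !hornerE.
Qed.

Definition mig_poly (m h : nat) : {poly int} := mignotte_poly (2 * (m + 2)) (2 * h%:Z ^+ m).

Lemma horner_mig_poly (R : comNzRingType) m h (x : R) :
  (map_poly intr (mig_poly m h)).[x] = x ^+ (2 * (m + 2)) - 2 * (2 * h%:R ^+ m * x + 1) ^+ 2.
Proof.
by rewrite horner_mignotte intrM (rmorphXn (intr : {rmorphism int -> R})) /= -pmulrn.
Qed.

Lemma map_poly_ratr_int (R : numFieldType) (p : {poly int}) :
  map_poly ratr (map_poly (intr : int -> rat) p) = map_poly (intr : int -> R) p.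
Proof. by rewrite -map_poly_comp; apply: eq_map_poly => z /=; rewrite ratr_int. Qed.

Lemma dvdp_of_common_root (R : numFieldType) (p c : {poly int}) (x : R) :
  irreducible_poly p -> root (map_poly intr p) x -> root (map_poly intr c) x ->
  p %| c.
Proof.
move=> irr_p px cx; rewrite -dvdp_rat_int.
set P := map_poly intr p; set C := map_poly intr c.
have [gcd1 | gcdN1] := eqVneq (size (gcdp P C)) 1%N.
  have coPC : coprimep (map_poly (ratr : rat -> R) P) (map_poly (ratr : rat -> R) C).
    by rewrite coprimep_map /coprimep gcd1.
  rewrite /P /C !map_poly_ratr_int in coPC.
  by have := coprimep_root coPC px; rewrite (rootP cx) eqxx.
have irr_P : irreducible_poly P by apply/irreducible_rat_int.
by rewrite -(eqp_dvdl _ (irr_P _ gcdN1 (dvdp_gcdl P C))) dvdp_gcdr.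
Qed.

Lemma monic_irreducible_factor (R : numFieldType) (p c : {poly int}) (x : R) :
  p \is monic -> irreducible_poly p -> root (map_poly intr p) x ->
  root (map_poly intr c) x -> exists q, c = p * q.
Proof.
move=> mon_p irr_p px cx; exists (c %/ p); rewrite mulrC Pdiv.IdomainUnit.divpK //.
  by rewrite (monicP mon_p) unitr1.
exact: dvdp_of_common_root irr_p px cx.
Qed.

Section CloseRoots.
Variable R : rcfType.

Definition close_roots (p : {poly R}) (eps : R) :=
  exists lam mu, [/\ lam != mu, root p lam, root p mu & `|lam - mu| <= eps].

Lemma close_roots_le (p : {poly R}) eps eps' :
  eps <= eps' -> close_roots p eps -> close_roots p eps'.
Proof.
by move=> le_eps [lam [mu [? ? ? dist]]]; exists lam, mu; split => //; apply: le_trans le_eps.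
Qed.

Lemma close_roots_sign_changes (p : {poly R}) (xl x0 xr : R) :
  xl <= x0 <= xr -> p.[xl] * p.[x0] < 0 -> p.[x0] * p.[xr] < 0 ->
  close_roots p (xr - xl).
Proof.
move=> /andP[le_l0 le_0r] sign_l sign_r.
have [lam] := poly_ivtoo le_l0 sign_l; rewrite in_itv /= => /andP[gt_lam lt_lam] root_lam.
have [mu] := poly_ivtoo le_0r sign_r; rewrite in_itv /= => /andP[gt_mu lt_mu] root_mu.
have lt_lam_mu : lam < mu := lt_trans lt_lam gt_mu.
exists lam, mu; split => //; first by rewrite lt_eqF.
rewrite distrC ger0_norm; lra.
Qed.

Lemma mignotte_close_roots (k : nat) (a : R) (p : {poly R}) : 1 <= a ->
  (forall x, p.[x] = x ^+ (2 * k) - 2 * (2 * a * x + 1) ^+ 2) ->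
  close_roots p (a ^+ k.+1)^-1.
Proof.
move=> a_ge1 p_eval.
have a_gt0 : 0 < a by apply: lt_le_trans a_ge1.
set c := (2 * a)^-1; set s := a^-1 ^+ k.
have ac : 2 * a * c = 1 by rewrite mulfV // mulf_neq0 ?pnatr_eq0 ?gt_eqF.
have s_gt0 : 0 < s by rewrite exprn_gt0 // invr_gt0.
have /andP[ainv_ge0 ainv_le1] : 0 <= a^-1 <= 1.
  by rewrite invr_ge0 invf_le1 // ltW.
have s_le1 : s <= 1 by rewrite exprn_ile1.
have pow_le y : 0 <= y <= 2 -> (- (y * c)) ^+ (2 * k) <= s ^+ 2.
  move=> /andP[y_ge0 y_le2].
  have half_y : (y / 2) ^+ 2 <= 1 by rewrite exprn_ile1 ?divr_ge0 ?ler_pdivrMr //; lra.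
  rewrite exprM sqrrN.
  have -> : (y * c) ^+ 2 = (y / 2) ^+ 2 * (a^-1) ^+ 2 by rewrite /c invfM; ring.
  rewrite exprMn [X in _ * X]exprAC.
  by rewrite ler_piMl ?exprn_ge0 ?sqr_ge0 // exprn_ile1 ?sqr_ge0.
have neg_at y : 0 <= y <= 2 -> (1 - y) ^+ 2 = s ^+ 2 -> p.[- (y * c)] < 0.
  move=> y_range sq_y; rewrite p_eval.
  have -> : 2 * a * - (y * c) + 1 = 1 - y * (2 * a * c) by ring.
  rewrite ac mulr1 sq_y subr_lt0 (le_lt_trans (pow_le _ y_range)) //.
  by rewrite ltr_pMl ?ltr1n // exprn_gt0.
have pos_at : 0 < p.[- c].
  rewrite p_eval mulrN ac addNr expr0n mulr0 subr0.
  by rewrite exprM sqrrN exprn_gt0 // exprn_even_gt0 // invr_eq0 mulf_neq0 ?pnatr_eq0 ?gt_eqF.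
have c_gt0 : 0 < c by rewrite invr_gt0 mulr_gt0.
have range : - ((1 + s) * c) <= - c <= - ((1 - s) * c) by apply/andP; split; nra.
have neg_l : p.[- ((1 + s) * c)] < 0.
  by apply: neg_at; [apply/andP; split; lra | ring].
have neg_r : p.[- ((1 - s) * c)] < 0.
  by apply: neg_at; [apply/andP; split; lra | ring].
have -> : (a ^+ k.+1)^-1 = - ((1 - s) * c) - - ((1 + s) * c).
  by rewrite -exprVn exprSr -/s /c invfM; field; rewrite gt_eqF.
apply: (close_roots_sign_changes (x0 := - c)) => //.
  by rewrite pmulr_llt0.
by rewrite pmulr_rlt0.
Qed.

End CloseRoots.

Section SparseMatrix.
Variables (L : eqType) (x0 : L) (col : L -> seq (L * int)) (layout : seq L) (N : nat).
Hypothesis size_layout : size layout = N.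
Local Notation lab i := (nth x0 layout i).

Definition sparse_mx : 'M[int]_N :=
  \matrix_(i, j) \sum_(e <- col (lab j) | e.1 == lab i) e.2.

Lemma mem_lab (j : 'I_N) : lab j \in layout.
Proof. by rewrite mem_nth // size_layout. Qed.

Lemma sum_entry_bounded (s : seq (L * int)) (x : L) (b : int) : 0 <= b ->
  uniq (map fst s) -> all (fun e => 0 <= e.2 <= b) s ->
  0 <= \sum_(e <- s | e.1 == x) e.2 <= b.
Proof.
move=> b_ge0 uniq_s /allP s_bounded; rewrite -big_filter.
have : (size [seq e <- s | e.1 == x] <= 1)%N.
  by rewrite size_filter -(count_map fst (pred1 x)) count_uniq_mem //; case: (_ \in _).
have : all (mem s) [seq e <- s | e.1 == x] by apply/allP => e; rewrite mem_filter => /andP[].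
case: [seq e <- s | e.1 == x] => [|e [|]] //=; first by rewrite big_nil lexx b_ge0.
by rewrite big_seq1 andbT => /s_bounded.
Qed.

Lemma sparse_mx_bounded (b : int) : 0 <= b ->
  (forall l, l \in layout -> uniq (map fst (col l))) ->
  (forall l, l \in layout -> all (fun e => 0 <= e.2 <= b) (col l)) ->
  forall i j, 0 <= sparse_mx i j <= b.
Proof.
move=> b_ge0 uniq_col col_bounded i j; rewrite mxE.
by apply: sum_entry_bounded; rewrite ?uniq_col ?col_bounded ?mem_lab.
Qed.

Section Eigenvector.
Variables (R : nzRingType) (value : L -> R) (lam : R).
Hypothesis uniq_layout : uniq layout.
Hypothesis col_closed : forall l, l \in layout -> {subset map fst (col l) <= layout}.
Hypothesis col_eigen : forall l, l \in layout ->
  \sum_(e <- col l) value e.1 * e.2%:~R = lam * value l.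

Lemma sparse_mx_eigen :
  (\row_j value (lab j)) *m map_mx intr sparse_mx = lam *: \row_j value (lab j).
Proof.
apply/rowP => j; rewrite !mxE -col_eigen ?mem_lab //.
under eq_bigr => i _ do rewrite !mxE rmorph_sum big_distrr /= big_mkcond.
rewrite exchange_big /=; apply: eq_big_seq => e /(map_f fst)/(col_closed (mem_lab j)) e_in.
have idx_lt : (index e.1 layout < N)%N by rewrite -size_layout index_mem.
rewrite -big_mkcond (big_pred1 (Ordinal idx_lt)) /= ?nth_index // => i.
by rewrite -{1}(nth_index x0 e_in) nth_uniq ?size_layout // eq_sym.
Qed.

End Eigenvector.

Lemma sparse_mx_root_char (F : fieldType) (value : L -> F) (lam : F) :
  uniq layout -> (forall l, l \in layout -> {subset map fst (col l) <= layout}) ->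
  (forall l, l \in layout -> \sum_(e <- col l) value e.1 * e.2%:~R = lam * value l) ->
  has (fun l => value l != 0) layout ->
  root (map_poly intr (char_poly sparse_mx)) lam.
Proof.
move=> uniq_layout col_closed col_eigen /hasP[l l_in value_l].
rewrite map_char_poly -eigenvalue_root_char; apply/eigenvalueP.
exists (\row_j value (lab j)); first exact: sparse_mx_eigen.
have idx_lt : (index l layout < N)%N by rewrite -size_layout index_mem.
apply: contra_neq value_l => /rowP /(_ (Ordinal idx_lt)).
by rewrite !mxE nth_index.
Qed.

End SparseMatrix.

Inductive coord := Pow of nat | Tail of nat | Slow of nat | Copy.

Definition coord_eqb (x y : coord) : bool :=
  match x, y with
  | Pow i, Pow j | Tail i, Tail j | Slow i, Slow j => i == j
  | Copy, Copy => true
  | _, _ => false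
  end.

Lemma coord_eqP : Equality.axiom coord_eqb.
Proof.
by case=> [i|i|i|] [j|j|j|] /=; try (by constructor); apply: (iffP eqP) => [->|[]].
Qed.

HB.instance Definition _ := hasDecEq.Build coord coord_eqP.

Lemma Pow_inj : injective Pow. Proof. by move=> ? ? []. Qed.
Lemma Tail_inj : injective Tail. Proof. by move=> ? ? []. Qed.
Lemma Slow_inj : injective Slow. Proof. by move=> ? ? []. Qed.

Lemma notin_map (I T : eqType) (x : T) (g : I -> T) s :
  (forall z, x != g z) -> (x \in map g s) = false.
Proof. by move=> xg; apply/mapP => -[z _] /eqP; rewrite (negPf (xg z)). Qed.

Lemma has_map_disjoint (I T : eqType) (f g : I -> T) s t :
  (forall y z, f y != g z) -> has (mem (map g s)) (map f t) = false.
Proof. by move=> fg; rewrite has_map; apply/hasPn => y _ /=; rewrite notin_map. Qed.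

Section MignotteMatrix.
Variables (m h : nat).

Definition slow_col (j : nat) : seq (coord * int) :=
  if (j < m)%N then [:: (Slow j.+1, h%:Z)] else [:: (Pow (2 * m + 3), 2)].

(* The last column uses the relation Tail m = Slow 0 + 2 Pow (m + 1) of [mig_value]. *)
Definition tail_col (k : nat) : seq (coord * int) :=
  if (k < m)%N then [:: (Tail k.+1, h%:Z)] else (Pow (m + 2), 2) :: slow_col 0.

(* Copy repeats Tail 0, so that the coefficient 4 of Tail 0 in lam ^+ (2m + 4)
   is split into two entries 2. *)
Definition mig_col (l : coord) : seq (coord * int) :=
  match l with
  | Pow i => if (i < 2 * m + 3)%N then [:: (Pow i.+1, 1)]
             else [:: (Pow 0, 2); (Tail 0, 2); (Copy, 2)]
  | Tail k => tail_col k
  | Slow j => slow_col j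
  | Copy => tail_col 0
  end.

(* Slow 0 occurs in no column; it only brings the size up to 2n + 1. *)
Definition mig_layout : seq coord :=
  [seq Pow i | i <- iota 0 (2 * m + 4)] ++ [seq Tail k | k <- iota 0 (m + 1)] ++
  [seq Slow j | j <- iota 0 (m + 1)] ++ [:: Copy].

Lemma size_mig_layout : size mig_layout = (2 * m + 3).*2.+1.
Proof. by rewrite !size_cat !size_map !size_iota /=; lia. Qed.

Lemma mem_mig_layout l : (l \in mig_layout) =
  match l with
  | Pow i => (i < 2 * m + 4)%N
  | Tail k | Slow k => (k <= m)%N
  | Copy => true
  end.
Proof.
case: l => [i|k|j|]; rewrite !mem_cat !inE /= ?orbT ?orbF //.
- by rewrite (mem_map Pow_inj) !notin_map ?mem_iota ?orbF //; lia.
- by rewrite (mem_map Tail_inj) !notin_map ?mem_iota ?orbF //; lia.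
- by rewrite (mem_map Slow_inj) !notin_map ?mem_iota ?orbF //; lia.
Qed.

Lemma uniq_mig_layout : uniq mig_layout.
Proof.
rewrite !cat_uniq (map_inj_uniq Pow_inj) (map_inj_uniq Tail_inj) (map_inj_uniq Slow_inj).
by rewrite !iota_uniq !has_cat !has_map_disjoint //= !notin_map.
Qed.

Lemma mig_col_closed l : l \in mig_layout ->
  {subset map fst (mig_col l) <= mig_layout}.
Proof.
move=> l_in; apply/allP; move: l_in; rewrite mem_mig_layout /mig_col /tail_col /slow_col.
by case: l => [i|k|j|] ?; repeat case: ifP => ? /=; rewrite !mem_mig_layout; lia.
Qed.

Lemma uniq_mig_col l : uniq (map fst (mig_col l)).
Proof.
by case: l => [i|k|j|]; rewrite /mig_col /tail_col /slow_col; repeat case: ifP => ? /=;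
  rewrite ?inE ?(inj_eq Pow_inj); lia.
Qed.

Lemma mig_col_bounded l : (2 <= h)%N -> all (fun e => 0 <= e.2 <= h%:Z) (mig_col l).
Proof.
move=> h_ge2; rewrite /mig_col /tail_col /slow_col.
by case: l => [i|k|j|]; repeat case: ifP => ? /=; lia.
Qed.

Definition mig_mx : 'M[int]_((2 * m + 3).*2.+1) := sparse_mx (Pow 0) mig_col mig_layout _.

Lemma mig_mx_bounded : (2 <= h)%N -> forall i j, 0 <= mig_mx i j <= h%:Z.
Proof.
move=> h_ge2; apply: sparse_mx_bounded; rewrite ?size_mig_layout //.
- by move=> l _; apply: uniq_mig_col.
- by move=> l _; apply: mig_col_bounded.
Qed.

Section Eigenvector.
Variables (F : fieldType) (lam : F).
Local Notation H := (h%:R : F).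

Definition tail_value (k : nat) : F := 2 * H ^+ (m - k) * lam ^+ k.+1 * (H ^+ m * lam + 1).
Definition slow_value (j : nat) : F := 2 * H ^+ (m - j) * lam ^+ (m + j).+2.

Definition mig_value (l : coord) : F :=
  match l with
  | Pow i => lam ^+ i
  | Tail k => tail_value k
  | Slow j => slow_value j
  | Copy => tail_value 0
  end.

Local Notation col_sum s := (\sum_(e <- s) mig_value e.1 * e.2%:~R).

Lemma slow_col_eigen j : (j <= m)%N -> col_sum (slow_col j) = lam * slow_value j.
Proof.
rewrite /slow_col /slow_value; case: ltnP => [lt_jm | le_mj] le_jm; rewrite big_seq1 /=.
  by rewrite -pmulrn /slow_value -(subnSK lt_jm) addnS !exprS; ring.
have -> : j = m by apply/eqP; rewrite eqn_leq le_jm.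
rewrite subnn (_ : (2 * m + 3 = (m + m).+3)%N) ?exprS; last by lia.
by rewrite expr0; ring.
Qed.

Lemma tail_col_eigen k : (k <= m)%N -> col_sum (tail_col k) = lam * tail_value k.
Proof.
rewrite /tail_col /tail_value; case: ltnP => [lt_km | le_mk] le_km.
  by rewrite big_seq1 /= -pmulrn /tail_value -(subnSK lt_km) !exprS; ring.
have -> : k = m by apply/eqP; rewrite eqn_leq le_km.
by rewrite big_cons slow_col_eigen // /slow_value /= subnn subn0 addn0 addn2 !exprS; ring.
Qed.

Hypothesis lam_root : root (map_poly intr (mig_poly m h)) lam.

Lemma mig_col_eigen l : l \in mig_layout -> col_sum (mig_col l) = lam * mig_value l.
Proof.
rewrite mem_mig_layout; case: l => [i|k|j|]; last 3 first.
- exact: tail_col_eigen.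
- exact: slow_col_eigen.
- by move=> _; apply: tail_col_eigen.
move=> lt_i /=; case: ltnP => [lt_i' | le_i].
  by rewrite big_seq1 /= mulr1 exprS.
have -> : i = (2 * m + 3)%N by lia.
move/rootP: lam_root; rewrite horner_mig_poly => /eqP; rewrite subr_eq0.
rewrite (_ : (2 * (m + 2) = (2 * m + 3).+1)%N) ?exprS => [/eqP -> |]; last by lia.
by rewrite !big_cons big_nil /= /tail_value subn0; ring.
Qed.

Lemma mig_mx_root_char : root (map_poly intr (char_poly mig_mx)) lam.
Proof.
apply: (@sparse_mx_root_char _ _ _ _ _ size_mig_layout _ mig_value).
- exact: uniq_mig_layout.
- exact: mig_col_closed.
- exact: mig_col_eigen.
- by apply/hasP; exists (Pow 0); rewrite ?mem_mig_layout /= ?expr0 ?oner_neq0 //; lia.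
Qed.

End Eigenvector.
End MignotteMatrix.

Definition sqrt2_col (l : coord) : seq (coord * int) :=
  match l with
  | Pow 2 => [:: (Pow 1, 2)]
  | Pow i => [:: (Pow i.+1, 1)]
  | _ => [::]
  end.

Definition sqrt2_layout : seq coord := [:: Pow 0; Pow 1; Pow 2].

Definition sqrt2_mx : 'M[int]_3 := sparse_mx (Pow 0) sqrt2_col sqrt2_layout 3.

Lemma sqrt2_mx_bounded h : (2 <= h)%N -> forall i j, 0 <= sqrt2_mx i j <= h%:Z.
Proof.
by move=> h_ge2; apply: sparse_mx_bounded => // l; rewrite !inE => /or3P[] /eqP -> /=; lia.
Qed.

Lemma sqrt2_mx_root_char (F : fieldType) (lam : F) :
  root (map_poly intr (mignotte_poly 2 0)) lam ->
  root (map_poly intr (char_poly sqrt2_mx)) lam.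
Proof.
move/rootP; rewrite horner_mignotte mul0r add0r expr1n mulr1 => /eqP.
rewrite subr_eq0 => /eqP lam2.
pose value l := if l is Pow i then lam ^+ i else 0.
apply: (@sparse_mx_root_char _ _ _ sqrt2_layout 3 erefl _ value) => //.
- by move=> l; rewrite !inE => /or3P[] /eqP -> x; rewrite !inE => /eqP ->.
- move=> l; rewrite !inE => /or3P[] /eqP -> /=; rewrite big_seq1 /= ?mulr1 ?exprS //.
  by rewrite expr0 !mulr1 -expr2 lam2 mulrC.
- by rewrite /= expr0 oner_neq0.
Qed.

Lemma sqrt2_close_roots (R : rcfType) :
  close_roots (map_poly intr (mignotte_poly 2 0)) (4 : R).
Proof.
have p_eval x : (map_poly intr (mignotte_poly 2 0)).[x] = x ^+ 2 - 2 :> R.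
  by rewrite horner_mignotte mul0r add0r expr1n mulr1.
rewrite (_ : 4 = 2 - -2); last by ring.
by apply: (close_roots_sign_changes (x0 := 0)); rewrite ?p_eval ?expr2 //; lra.
Qed.

Lemma mig_poly_close_roots (R : rcfType) m h : (1 <= h)%N ->
  close_roots (map_poly intr (mig_poly m h)) ((h%:R : R) ^+ (m * (m + 3)))^-1.
Proof.
move=> h_ge1; rewrite (_ : m * (m + 3) = m * (m + 2).+1)%N; last by lia.
rewrite exprM; apply: mignotte_close_roots => [|x].
  by rewrite exprn_ege1 // ler1n.
by rewrite horner_mig_poly.
Qed.

Lemma odd_cases n : odd n -> n = 1%N \/ exists m, n = (2 * m + 3)%N.
Proof.
move=> n_odd; rewrite -(odd_double_half n) n_odd -mul2n.
by case: n./2 => [|m]; [left | right; exists m; lia].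
Qed.

Lemma sep_exp_odd m : sep_exp (2 * m + 3) = (m * (m + 3))%N.
Proof.
rewrite /sep_exp.
have -> : ((2 * m + 3)%N%:Z + 3) * ((2 * m + 3)%N%:Z - 3) = (m * (m + 3))%N%:Z * 4 by lia.
exact: mulzK.
Qed.

Local Notation RR := Rdefinitions.R.

Theorem mainTheorem1 (n h : nat) (hn_odd : odd n) (hn_pos : (0 < n)%N) (hh : (2 <= h)%N) :
  exists B : 'M[int]_(n.*2.+1),
    (forall i j, 0 <= B i j <= h%:Z) /\
    exists p : {poly int},
      [/\ p \is monic, irreducible_poly p, size p = (n + 2)%N,
          (exists q : {poly int}, char_poly B = p * q) &
          exists lam mu : Rdefinitions.R,
            [/\ lam != mu,
                root (map_poly intr p) lam,
                root (map_poly intr p) mu &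
                `|lam - mu| <= (h%:R : Rdefinitions.R) ^ (- sep_exp n)]].
Proof.
have [-> | [m ->]] := odd_cases hn_odd.
  have sq_size : (size ((0 *: 'X + 1 : {poly int}) ^+ 2) <= 2)%N.
    by rewrite scale0r add0r expr1n size_poly1.
  have [mon irr] := (monic_mignotte_poly sq_size, irreducible_mignotte_poly sq_size).
  have [lam [mu [_ root_lam _ _]]] := sqrt2_close_roots RR.
  exists sqrt2_mx; split; first exact: sqrt2_mx_bounded.
  exists (mignotte_poly 2 0); split => //; first exact: size_mignotte_poly.
    exact: monic_irreducible_factor mon irr root_lam (sqrt2_mx_root_char root_lam).
  apply: close_roots_le (sqrt2_close_roots RR).
  have h_ge2 : 2 <= h%:R :> RR by rewrite ler_nat.
  by rewrite (_ : sep_exp 1 = -2) // opprK -exprnP expr2; nra.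
have sq_size : (size (((2 * h%:Z ^+ m) *: 'X + 1) ^+ 2) <= 2 * (m + 2))%N.
  by apply: leq_trans (size_mignotte_square _) _; lia.
have [mon irr] := (monic_mignotte_poly sq_size, irreducible_mignotte_poly sq_size).
have h_ge1 : (1 <= h)%N by apply: leq_trans hh.
have [lam [mu [_ root_lam _ _]]] := mig_poly_close_roots RR m h_ge1.
exists (mig_mx m h); split; first exact: mig_mx_bounded.
exists (mig_poly m h); split => //; first by rewrite size_mignotte_poly; lia.
  exact: monic_irreducible_factor mon irr root_lam (mig_mx_root_char root_lam).
by rewrite sep_exp_odd -exprnN; apply: mig_poly_close_roots.
Qed.
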